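(* Let $1\le p<\infty$, $N\ge2$, and for $1\le i\le N$ let $T_i$ be the unilateral weighted backward shift on $\ell^p(\mathbb{N})$ with weight sequence $(w^{(i)}_m)_{m\in\mathbb{N}}$. If $T_1,\dots,T_N$ are s-hypercyclic, then the direct sum $T_1\oplus\cdots\oplus T_N$ is hypercyclic on $\oplus_{i=1}^N\ell^p(\mathbb{N})$.
   Context: $\{e_m\}$ is the canonical basis of $\ell^p(\mathbb{N})$ over $\mathbb{K}\in\{\mathbb{R},\mathbb{C}\}$. The unilateral weighted backward shift with bounded weight sequence $(w_m)$ is $Te_m=w_me_{m-1}$ for $m\ge2$, $Te_1=0$. Operators $T_1,\dots,T_N$ on $X$ are s-hypercyclic if some $x\in X$ has the closure of $\{(T_1^nx,\dots,T_N^nx):n\in\mathbb{N}\}$ containing the diagonal $\{(y,\dots,y):y\in X\}$ of $\oplus_{i=1}^NX$. An operator is hypercyclic if some vector has dense orbit. *)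

From HB Require Import structures.
From mathcomp Require Import all_boot all_order all_algebra.
From mathcomp Require Import all_classical all_reals all_analysis.
From mathcomp Require Import complex.
Set Implicit Arguments. Unset Strict Implicit. Unset Printing Implicit Defensive.
Import Order.TTheory GRing.Theory Num.Theory.
Local Open Scope ring_scope.

Definition absRR (R : realType) (x : R) : R := `|x|.
Definition absRC (R : realType) (x : R[i]) : R := ComplexField.Normc.normc x.

Section Lp.
Variables (R : realType) (K : numFieldType) (nrm : K -> R) (p : R).

(* sum_n |x_n|^p, as an extended real (well defined for any sequence) *)
Definition lp_sum (x : nat -> K) : \bar R :=
  (\sum_(0 <= k <oo) ((nrm (x k)) `^ p)%:E)%E.

(* membership in l^p(N) (sequences indexed from 0) *)
Definition in_lp (x : nat -> K) : Prop := (lp_sum x < +oo)%E.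

Definition lp_norm (x : nat -> K) : R := (fine (lp_sum x)) `^ p^-1.

(* unilateral weighted backward shift: T e_0 = 0, T e_m = w m * e_{m-1}
   (m >= 1); i.e. (T x)_j = w_{j+1} x_{j+1}. *)
Definition wshift (w : nat -> K) (x : nat -> K) : nat -> K :=
  fun j => w j.+1 * x j.+1.

Definition bounded_weights (w : nat -> K) : Prop :=
  exists M : R, forall m, nrm (w m) <= M.

(* T_1, ..., T_N s-hypercyclic on l^p: some x in l^p whose orbit
   {(T_1^n x, ..., T_N^n x)} has closure (in the product topology of
   the direct sum) containing the diagonal. *)
Definition s_hypercyclic (N : nat) (T : 'I_N -> (nat -> K) -> (nat -> K)) : Prop :=
  exists x, in_lp x /\
    forall y, in_lp y -> forall eps : R, 0 < eps ->
      exists n : nat, forall i : 'I_N,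
        lp_norm (fun k => iter n (T i) x k - y k) < eps.

Definition dsum_hypercyclic (N : nat) (T : 'I_N -> (nat -> K) -> (nat -> K)) : Prop :=
  exists x : 'I_N -> nat -> K, (forall i, in_lp (x i)) /\
    forall y : 'I_N -> nat -> K, (forall i, in_lp (y i)) ->
      forall eps : R, 0 < eps ->
      exists n : nat, forall i : 'I_N,
        lp_norm (fun k => iter n (T i) (x i) k - y i k) < eps.

Definition cor3p8_statement : Prop :=
  forall (N : nat), (2 <= N)%N ->
  forall w : 'I_N -> nat -> K, (forall i, bounded_weights (w i)) ->
  s_hypercyclic (fun i => wshift (w i)) ->
  dsum_hypercyclic (fun i => wshift (w i)).

End Lp.

From HB Require Import structures.
From mathcomp Require Import all_boot all_order all_algebra.
From mathcomp Require Import all_classical all_reals all_analysis.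
From mathcomp Require Import complex.
From mathcomp Require Import ring lra zify.
Set Implicit Arguments. Unset Strict Implicit. Unset Printing Implicit Defensive.
Import Order.TTheory GRing.Theory Num.Theory.
Local Open Scope ring_scope.

(* Let x be a common s-hypercyclic vector of the shifts T_i, and enumerate all
   pairs (a, L) of an exponent tuple a = (a_i) and a length L.  Stage k of the
   construction picks a time n_k, far beyond all earlier windows, at which
   every T_i^{n_k} x is close to the indicator of [0, L) and the tail of x
   after n_k is tiny; x_i is then x multiplied on the window [n_k, n_k + L)
   by the block T_i^{a_i} x translated there.  Consequently T_i^{n_k} x_i is
   close to T_i^{a_i} x on [0, L) and small beyond L, since only the tiny
   tail of x lives there.  Given targets y_i, s-hypercyclicity provides
   exponents with T_i^{a_i} x close to y_i, and the stage of (a, L) for large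
   L does the rest.  Arbitrarily late times n_k exist because a target
   perturbed by a spike where the early orbit is small cannot be approximated
   at early times. *)

Section LpShifts.
Variables (R : realType) (K : numFieldType) (nrm : K -> R) (p : R).
Hypothesis p_ge1 : 1 <= p.
Hypothesis nrm_ge0 : forall a, 0 <= nrm a.
Hypothesis nrmD : forall a b, nrm (a + b) <= nrm a + nrm b.
Hypothesis nrmM : forall a b, nrm (a * b) = nrm a * nrm b.
Hypothesis nrmN : forall a, nrm (- a) = nrm a.
Hypothesis nrm_nat : forall n : nat, nrm n%:R = n%:R.

Lemma p_gt0 : 0 < p. Proof. exact: lt_le_trans ltr01 p_ge1. Qed.

Lemma powp_le a b : 0 <= a -> a <= b -> a `^ p <= b `^ p.
Proof.
move=> a0 ab; apply: (ge0_ler_powR (ltW p_gt0)) => //; rewrite nnegrE //.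
exact: le_trans ab.
Qed.

Lemma powp_lt_inv a b : 0 <= a -> 0 <= b -> a `^ p < b `^ p -> a < b.
Proof. by move=> a0 b0; apply: contraTT; rewrite -!leNgt; exact: powp_le. Qed.

Lemma powp_invK a : 0 <= a -> (a `^ p^-1) `^ p = a.
Proof. by move=> a0; rewrite -powRrM mulVf ?powRr1 // gt_eqF ?p_gt0. Qed.

Lemma powpKinv a : 0 <= a -> (a `^ p) `^ p^-1 = a.
Proof. by move=> a0; rewrite -powRrM mulfV ?powRr1 // gt_eqF ?p_gt0. Qed.

Lemma two_powp_ge1 : 1 <= 2 `^ p.
Proof.
by have := @ler_powR R 2 (ler1n _ 2) 0 p (ltW p_gt0); rewrite powRr0.
Qed.

Lemma powpD_le a b : 0 <= a -> 0 <= b ->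
  (a + b) `^ p <= 2 `^ p * (a `^ p + b `^ p).
Proof.
wlog ab : a b / a <= b.
  move=> H a0 b0; case: (leP a b) => [|/ltW] ba; first exact: H.
  by rewrite addrC [a `^ p + _]addrC; exact: H.
move=> a0 b0; have -> : 2 `^ p * (a `^ p + b `^ p) = (2 * b) `^ p + 2 `^ p * a `^ p.
  by rewrite powRM // mulrDr addrC.
have ab2 : a + b <= 2 * b by lra.
apply: le_trans (powp_le (addr_ge0 a0 b0) ab2) _.
by rewrite lerDl mulr_ge0 ?powR_ge0.
Qed.

Lemma nrm0 : nrm 0 = 0.
Proof. by have := nrm_nat 0; rewrite mulr0n. Qed.

Lemma nrm1 : nrm 1 = 1.
Proof. by have := nrm_nat 1; rewrite mulr1n. Qed.

Lemma small_inv_nat (q : R) : 0 < q -> exists r : nat, (r.+1%:R)^-1 <= q.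
Proof.
move=> q0; have qV0 : 0 <= q^-1 by rewrite invr_ge0 ltW.
exists (Num.Def.archi_bound q^-1); rewrite -[X in _ <= X]invrK lef_pV2 ?posrE ?invr_gt0 //.
by apply/ltW/(lt_le_trans (archi_boundP qV0)); rewrite ler_nat.
Qed.

Lemma small_scalar (q : R) : 0 < q -> exists s : K, 0 < nrm s <= q.
Proof.
move=> /small_inv_nat[r rq]; suff s_nrm : nrm (r.+1%:R)^-1 = (r.+1%:R)^-1.
  by exists (r.+1%:R)^-1; rewrite s_nrm rq invr_gt0 ltr0Sn.
apply: (@mulIf _ r.+1%:R); first by rewrite pnatr_eq0.
have -> : nrm (r.+1%:R)^-1 * r.+1%:R = 1.
  by rewrite -nrm_nat -nrmM mulVf ?nrm1 ?pnatr_eq0.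
by rewrite mulVf ?pnatr_eq0.
Qed.

Definition mass (v : nat -> K) (a b : nat) : R := \sum_(a <= m < b) nrm (v m) `^ p.

Lemma mass_ge0 v a b : 0 <= mass v a b.
Proof. by apply: sumr_ge0 => m _; exact: powR_ge0. Qed.

Lemma mass_cat v a b c : (a <= b)%N -> (b <= c)%N -> mass v a c = mass v a b + mass v b c.
Proof. by move=> ab bc; rewrite /mass (big_cat_nat ab bc). Qed.

Lemma mass_widenr v a b b' : (b <= b')%N -> mass v a b <= mass v a b'.
Proof.
move=> bb'; case: (leqP a b) => ab; first by rewrite (mass_cat v ab bb') lerDl mass_ge0.
by rewrite /mass big_geq ?mass_ge0 // ltnW.
Qed.

Lemma mass_narrowl v a a' b : (a <= a')%N -> mass v a' b <= mass v a b.
Proof.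
move=> aa'; case: (leqP a' b) => a'b; first by rewrite (mass_cat v aa' a'b) lerDr mass_ge0.
by rewrite /mass big_geq ?mass_ge0 // ltnW.
Qed.

Lemma mass_split_le v a b c : mass v a b <= mass v a c + mass v c b.
Proof.
case: (leqP a c) => ac; last first.
  by rewrite /mass [X in X + _]big_geq ?add0r ?mass_narrowl // ltnW.
case: (leqP c b) => cb; first by rewrite (mass_cat v ac cb).
by rewrite /mass [X in _ + X]big_geq ?addr0 ?mass_widenr // ltnW.
Qed.

Lemma mass_term_le v a b m : (a <= m < b)%N -> nrm (v m) `^ p <= mass v a b.
Proof.
move=> /andP[am mb]; apply: le_trans (mass_widenr v a mb).
by rewrite /mass big_nat_recr //= lerDr mass_ge0.
Qed.

Lemma mass0 v a b : (forall m, (a <= m < b)%N -> v m = 0) -> mass v a b = 0.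
Proof.
move=> v0; rewrite /mass big_nat_cond big1 // => m /andP[/v0 -> _].
by rewrite nrm0 powR0 // gt_eqF ?p_gt0.
Qed.

Lemma eq_mass u v a b : (forall m, (a <= m < b)%N -> nrm (u m) = nrm (v m)) ->
  mass u a b = mass v a b.
Proof. by move=> uv; apply: eq_big_nat => m /uv ->. Qed.

Lemma massD_le u v a b :
  mass (fun m => u m + v m) a b <= 2 `^ p * (mass u a b + mass v a b).
Proof.
rewrite /mass -big_split mulr_sumr /=; apply: ler_sum => m _.
exact: le_trans (powp_le (nrm_ge0 _) (nrmD _ _)) (powpD_le (nrm_ge0 _) (nrm_ge0 _)).
Qed.

Lemma massB_le u v a b :
  mass (fun m => u m - v m) a b <= 2 `^ p * (mass u a b + mass v a b).
Proof.
have := massD_le u (fun m => - v m) a b.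
by rewrite (@eq_mass (fun m => - v m) v) // => m _; rewrite nrmN.
Qed.

Lemma massB_trans_le u v z a b : mass (fun m => u m - v m) a b <=
  2 `^ p * (mass (fun m => u m - z m) a b + mass (fun m => z m - v m) a b).
Proof.
have := massD_le (fun m => u m - z m) (fun m => z m - v m) a b.
by rewrite (@eq_mass _ (fun m => u m - v m)) // => m _; rewrite addrA subrK.
Qed.

Lemma mass_mul_le d v a b c : (forall m, (a <= m < b)%N -> nrm (d m) `^ p <= c) ->
  mass (fun m => d m * v m) a b <= c * mass v a b.
Proof.
move=> dc; rewrite /mass mulr_sumr big_nat_cond [X in _ <= X]big_nat_cond.
apply: ler_sum => m /andP[/dc + _].
by rewrite nrmM powRM //; apply: ler_wpM2r; exact: powR_ge0.
Qed.

Lemma mass_le_lp_sum v b : ((mass v 0 b)%:E <= lp_sum nrm p v)%E.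
Proof.
rewrite /mass -sumEFin; apply: nneseries_lim_ge => k _ _.
by rewrite lee_fin powR_ge0.
Qed.

Lemma lp_sum_le v B : (forall b, mass v 0 b <= B) -> (lp_sum nrm p v <= B%:E)%E.
Proof.
move=> vB; apply: lime_le.
  by apply: is_cvg_nneseries => k _ _; rewrite lee_fin powR_ge0.
by apply: nearW => b; rewrite sumEFin lee_fin; exact: vB.
Qed.

Lemma lp_sum_ge0 v : (0 <= lp_sum nrm p v)%E.
Proof. by apply: le_trans (mass_le_lp_sum v 0); rewrite /mass big_geq. Qed.

Lemma mass_le_fine_lp_sum v b : in_lp nrm p v -> mass v 0 b <= fine (lp_sum nrm p v).
Proof.
by move=> v_lp; rewrite -lee_fin fineK ?mass_le_lp_sum // ge0_fin_numE ?lp_sum_ge0.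
Qed.

Lemma in_lpP v : in_lp nrm p v <-> exists B, forall b, mass v 0 b <= B.
Proof.
split=> [v_lp|[B vB]]; first by exists (fine (lp_sum nrm p v)) => b; exact: mass_le_fine_lp_sum.
by rewrite /in_lp (le_lt_trans (lp_sum_le vB)) ?ltry.
Qed.

Lemma mass_lt_lp_norm v eps b : in_lp nrm p v -> lp_norm nrm p v < eps ->
  mass v 0 b < eps `^ p.
Proof.
move=> v_lp vn; apply: le_lt_trans (mass_le_fine_lp_sum b v_lp) _.
have S0 : 0 <= fine (lp_sum nrm p v) by rewrite fine_ge0 ?lp_sum_ge0.
rewrite -(powp_invK S0) gt0_ltr_powR ?p_gt0 // nnegrE ?powR_ge0 //.
exact: le_trans (powR_ge0 _ _) (ltW vn).
Qed.

Lemma lp_norm_lt_mass v B eps : 0 < eps -> (forall b, mass v 0 b <= B) ->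
  B < eps `^ p -> lp_norm nrm p v < eps.
Proof.
move=> eps0 vB Beps; have v_lp : in_lp nrm p v by apply/in_lpP; exists B.
have SB : fine (lp_sum nrm p v) <= B.
  by rewrite -lee_fin fineK ?(lp_sum_le vB) // ge0_fin_numE ?lp_sum_ge0.
have S0 : 0 <= fine (lp_sum nrm p v) by rewrite fine_ge0 ?lp_sum_ge0.
have ip0 : 0 < p^-1 by rewrite invr_gt0 p_gt0.
have B0 : 0 <= B := le_trans S0 SB.
rewrite /lp_norm -(powpKinv (ltW eps0)); apply: (@le_lt_trans _ _ (B `^ p^-1)).
  by apply: ge0_ler_powR; rewrite ?nnegrE ?(ltW ip0).
by rewrite gt0_ltr_powR ?nnegrE ?powR_ge0.
Qed.

Lemma in_lp_tail v d : in_lp nrm p v -> 0 < d -> exists a, forall b, mass v a b <= d.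
Proof.
move=> /in_lpP[B vB] d0.
pose E : set R := range (mass v 0).
have E_sup : has_sup E by split; [exists (mass v 0 0), 0%N | exists B => _ [b _ <-]].
have [_ [a _ <-] Ea] := sup_adherent d0 E_sup.
exists a => b; case: (leqP a b) => ab; last by rewrite /mass big_geq ?(ltW d0) // ltnW.
have : mass v 0 b <= sup E by apply: ub_le_sup; [case: E_sup | exists b].
rewrite (mass_cat v (leq0n a) ab); lra.
Qed.

Lemma in_lpD u v : in_lp nrm p u -> in_lp nrm p v -> in_lp nrm p (fun m => u m + v m).
Proof.
move=> /in_lpP[Bu uB] /in_lpP[Bv vB]; apply/in_lpP; exists (2 `^ p * (Bu + Bv)) => b.
by apply: le_trans (massD_le _ _ _ _) _; rewrite ler_wpM2l ?powR_ge0 ?lerD.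
Qed.

Lemma in_lpB u v : in_lp nrm p u -> in_lp nrm p v -> in_lp nrm p (fun m => u m - v m).
Proof.
move=> /in_lpP[Bu uB] /in_lpP[Bv vB]; apply/in_lpP; exists (2 `^ p * (Bu + Bv)) => b.
by apply: le_trans (massB_le _ _ _ _) _; rewrite ler_wpM2l ?powR_ge0 ?lerD.
Qed.

Section WeightedShift.
Variables (w : nat -> K) (M : R).
Hypothesis w_le : forall m, nrm (w m) <= M.

Lemma iter_wshiftM n d v j :
  iter n (wshift w) (fun m => d m * v m) j = d (j + n)%N * iter n (wshift w) v j.
Proof.
elim: n j => [|n IH] j /=; first by rewrite addn0.
by rewrite /wshift IH addSnnS mulrCA.
Qed.

Lemma nrm_iter_wshift_le n v j :
  nrm (iter n (wshift w) v j) <= M ^+ n * nrm (v (j + n)%N).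
Proof.
have M0 : 0 <= M := le_trans (nrm_ge0 _) (w_le 0).
elim: n j => [|n IH] j /=; first by rewrite expr0 mul1r addn0.
by rewrite /wshift nrmM exprS -mulrA addnS -addSn ler_pM ?IH.
Qed.

Lemma mass_iter_wshift_le n v a b :
  mass (iter n (wshift w) v) a b <= (M `^ p) ^+ n * mass v (a + n) (b + n).
Proof.
have M0 : 0 <= M := le_trans (nrm_ge0 _) (w_le 0).
have powpX k : (M ^+ k) `^ p = (M `^ p) ^+ k.
  by elim: k => [|k IH]; rewrite ?powR1 // !exprS powRM ?IH ?exprn_ge0.
rewrite /mass [X in _ <= _ * X]big_addn addnK mulr_sumr; apply: ler_sum => m _.
by rewrite -powpX -powRM ?exprn_ge0 ?powp_le ?nrm_iter_wshift_le.
Qed.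

Lemma in_lp_iter_wshift n v : in_lp nrm p v -> in_lp nrm p (iter n (wshift w) v).
Proof.
move=> /in_lpP[B vB]; apply/in_lpP; exists ((M `^ p) ^+ n * B) => b.
apply: le_trans (mass_iter_wshift_le _ _ _ _) _.
by rewrite ler_wpM2l ?exprn_ge0 ?powR_ge0 // (le_trans (mass_narrowl _ _ (leq0n n))).
Qed.

End WeightedShift.

Lemma in_lp_vanish v r : in_lp nrm p v -> 0 < r ->
  exists J0, forall J, (J0 <= J)%N -> nrm (v J) < r.
Proof.
move=> v_lp r0; have rp0 : 0 < r `^ p / 2 by rewrite divr_gt0 ?powR_gt0.
have [J0 J0_tail] := in_lp_tail v_lp rp0; exists J0 => J J0J.
apply: powp_lt_inv; rewrite ?(ltW r0) //.
apply: le_lt_trans (@mass_term_le v J0 J.+1 J _) _; first by rewrite J0J ltnSn.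
by apply: le_lt_trans (J0_tail _) _; rewrite ltr_pdivrMr // ltr_pMr ?powR_gt0 ?ltr1n.
Qed.

Definition spike (J : nat) (s : K) : nat -> K := fun m => if m == J then s else 0.

Lemma mass_spike J s a b : mass (spike J s) a b <= nrm s `^ p.
Proof.
elim: b => [|b IH]; first by rewrite /mass big_geq ?powR_ge0.
case: (leqP a b) => ab; last by rewrite /mass big_geq ?powR_ge0.
rewrite /mass big_nat_recr //= -/(mass _ a b) {2}/spike.
case: eqVneq => [bJ|_]; last by rewrite nrm0 powR0 ?gt_eqF ?p_gt0 ?addr0.
by rewrite mass0 ?add0r // => m /andP[_ mb]; rewrite /spike -bJ ltn_eqF.
Qed.

Lemma in_lp_spike J s : in_lp nrm p (spike J s).
Proof. by apply/in_lpP; exists (nrm s `^ p) => b; exact: mass_spike. Qed.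

Definition ind (L : nat) : nat -> K := fun m => if (m < L)%N then 1 else 0.

Lemma in_lp_ind L : in_lp nrm p (ind L).
Proof.
apply/in_lpP; exists L%:R => b; apply: le_trans (mass_split_le _ 0 b L) _.
rewrite [X in _ + X]mass0 ?addr0 => [|m /andP[Lm _]]; last by rewrite /ind ltnNge Lm.
have -> : L%:R = (1 : R) *+ (L - 0) by rewrite subn0.
rewrite /mass -sumr_const_nat; apply: ler_sum => m _.
by rewrite /ind; case: ifP; rewrite ?nrm1 ?powR1 // nrm0 powR0 ?gt_eqF ?p_gt0.
Qed.

Section DiagonalOrbit.
Variables (N : nat) (w : 'I_N -> nat -> K) (M : R) (x : nat -> K).
Hypothesis M_ge1 : 1 <= M.
Hypothesis w_le : forall i m, nrm (w i m) <= M.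
Hypothesis x_lp : in_lp nrm p x.
Hypothesis x_diag : forall y, in_lp nrm p y -> forall eps, 0 < eps -> exists n,
  forall i, lp_norm nrm p (fun m => iter n (wshift (w i)) x m - y m) < eps.

Local Notation T i := (wshift (w i)).

Lemma diag_approx y d : in_lp nrm p y -> 0 < d ->
  exists n, forall i b, mass (fun m => iter n (T i) x m - y m) 0 b <= d.
Proof.
move=> y_lp d0; have [n n_ok] := x_diag y_lp (powR_gt0 p^-1 d0).
exists n => i b; apply/ltW; rewrite -[d](powp_invK (ltW d0)).
apply: (mass_lt_lp_norm b _ (n_ok i)); apply: in_lpB y_lp.
exact: (in_lp_iter_wshift (w_le i) n x_lp).
Qed.

Lemma early_orbit_small (i0 : 'I_N) y n0 r : in_lp nrm p y -> 0 < r ->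
  exists J, forall n, (n < n0)%N -> nrm (iter n (T i0) x J - y J) < r.
Proof.
move=> y_lp r0; have Mn0 : 0 < M ^+ n0 by rewrite exprn_gt0 // (lt_le_trans ltr01).
have [Jx Jx_small] := in_lp_vanish x_lp (divr_gt0 (divr_gt0 r0 (ltr0Sn _ 1)) Mn0).
have [Jy Jy_small] := in_lp_vanish y_lp (divr_gt0 r0 (ltr0Sn _ 1)).
exists (maxn Jx Jy) => n nn0.
have x_small : nrm (iter n (T i0) x (maxn Jx Jy)) < r / 2.
  apply: le_lt_trans (nrm_iter_wshift_le (w_le i0) _ _ _) _.
  have Jx_le : (Jx <= maxn Jx Jy + n)%N by lia.
  apply: le_lt_trans (ler_wpM2r (nrm_ge0 _) (ler_weXn2l M_ge1 (ltnW nn0))) _.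
  by rewrite mulrC -ltr_pdivlMr //; exact: Jx_small _ Jx_le.
have y_small : nrm (y (maxn Jx Jy)) < r / 2 by rewrite Jy_small ?leq_maxr.
by apply: le_lt_trans (nrmD _ _) _; rewrite nrmN; lra.
Qed.

Lemma diag_approx_late (i0 : 'I_N) y d n0 : in_lp nrm p y -> 0 < d ->
  exists2 n, (n0 <= n)%N & forall i b, mass (fun m => iter n (T i) x m - y m) 0 b <= d.
Proof.
move=> y_lp d0; set C := 2 `^ p; have C1 : 1 <= C := two_powp_ge1.
have C0 : 0 < C := lt_le_trans ltr01 C1.
have dC0 : 0 < d / (2 * C) by rewrite divr_gt0 ?mulr_gt0.
have [s /andP[s0]] : exists s : K, 0 < nrm s <= Num.min (d / (2 * C)) 1.
  by apply: small_scalar; rewrite lt_min dC0 ltr01.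
rewrite le_min => /andP[s_dC s_1].
have [J J_far] := early_orbit_small i0 n0 y_lp (divr_gt0 s0 (ltr0Sn _ 1)).
(* Every early orbit point is within [nrm s / 2] of [y] at [J], hence far from [y']. *)
pose y' m := y m + spike J s m.
have y'_lp : in_lp nrm p y' by apply: in_lpD y_lp (in_lp_spike J s).
have sp0 : 0 < (nrm s / 2) `^ p by rewrite powR_gt0 // divr_gt0.
set dl := Num.min (d / (2 * C)) ((nrm s / 2) `^ p / 2).
have dl0 : 0 < dl by rewrite lt_min dC0 divr_gt0.
have [n n_ok] := diag_approx y'_lp dl0.
exists n.
  rewrite leqNgt; apply/negP => nn0.
  have dl_le : dl <= (nrm s / 2) `^ p / 2 by rewrite /dl ge_min lexx orbT.
  suff : (nrm s / 2) `^ p <= dl by lra.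
  apply: le_trans (n_ok i0 J.+1); apply: le_trans (@mass_term_le _ 0 J.+1 J (ltnSn _)).
  apply: powp_le; first by rewrite divr_ge0.
  set u := iter n (T i0) x J - y J; have := J_far _ nn0; have := nrmD (s - u) u.
  have -> : nrm (s - u) = nrm (iter n (T i0) x J - y' J).
    by rewrite -nrmN opprB /y' /spike eqxx opprD addrA.
  rewrite subrK; lra.
move=> i b.
have -> : (fun m => iter n (T i) x m - y m) =
    (fun m => (iter n (T i) x m - y' m) + spike J s m).
  by apply/funext => m; rewrite /y' opprD addrA subrK.
have orbit_le : mass (fun m => iter n (T i) x m - y' m) 0 b <= d / (2 * C).
  by apply: le_trans (n_ok i b) _; rewrite /dl ge_min lexx.
have spike_le : mass (spike J s) 0 b <= d / (2 * C).
  apply: le_trans (mass_spike _ _ _ _) (le_trans _ s_dC).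
  by apply: ge1r_powR; rewrite ?s0 ?s_1.
apply: le_trans (massD_le _ _ _ _) _.
have -> : d = C * (d / (2 * C) + d / (2 * C)) by field; rewrite gt_eqF.
by rewrite ler_wpM2l ?lerD // ltW.
Qed.

Section Construction.
Variable i0 : 'I_N.

(* Stage [k] serves the pair (exponents, length) [code k]. *)
Definition code (k : nat) : {ffun 'I_N -> nat} * nat :=
  odflt ([ffun => 0%N], 0%N) (unpickle k).
Definition exps k := (code k).1.
Definition len k := (code k).2.
Definition block k i := iter (exps k i) (T i) x.
Definition block_mass k := \sum_(i < N) mass (block k i) 0 (len k).
Definition half k : R := 2^-1 ^+ k.
(* [(M^p)^t] pays for [t] shifts; [t + 1] turns tails into the accuracy [1/(L+1)]. *)
Definition penalty t : R := t.+1%:R * (M `^ p) ^+ t.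

Lemma code_onto (a : 'I_N -> nat) L : exists k, (forall i, exps k i = a i) /\ len k = L.
Proof.
exists (pickle ([ffun i => a i], L)); rewrite /exps /len /code pickleK /=.
by split=> // i; rewrite ffunE.
Qed.

Lemma block_mass_ge0 k : 0 <= block_mass k.
Proof. by apply: sumr_ge0 => i _; exact: mass_ge0. Qed.

Lemma block_term_le k i j : (j < len k)%N -> nrm (block k i j) `^ p <= block_mass k.
Proof.
move=> jL; apply: le_trans (@mass_term_le _ 0 (len k) j jL) _.
by rewrite /block_mass (bigD1 i) //= lerDl sumr_ge0 // => i' _; exact: mass_ge0.
Qed.

Lemma half_gt0 k : 0 < half k.
Proof. by rewrite exprn_gt0 // invr_gt0. Qed.

Lemma half_le1 k : half k <= 1.
Proof. by rewrite exprn_ile1 // ?invr_ge0 // invf_le1 // ler1n. Qed.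

Lemma powpM_ge1 : 1 <= M `^ p.
Proof. by have := powp_le ler01 M_ge1; rewrite powR1. Qed.

Lemma penalty_gt0 t : 0 < penalty t.
Proof. by rewrite mulr_gt0 // exprn_gt0 // (lt_le_trans ltr01 powpM_ge1). Qed.

Lemma penalty_mono : {homo penalty : t t' / (t <= t')%N >-> t <= t'}.
Proof.
move=> t t' tt'; rewrite ler_pM ?exprn_ge0 ?powR_ge0 // ?ler_nat ?ltnS //.
exact: (ler_weXn2l powpM_ge1 tt').
Qed.

Lemma penalty_absorb n L : (M `^ p) ^+ n / penalty (n + L) <= L.+1%:R^-1.
Proof.
have bn0 : 0 < (M `^ p) ^+ (n + L) by rewrite exprn_gt0 // (lt_le_trans ltr01 powpM_ge1).
rewrite /penalty invfM mulrCA -[X in _ <= X]mulr1; apply: ler_pM.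
- by rewrite invr_ge0.
- by rewrite mulr_ge0 ?invr_ge0 ?exprn_ge0 ?powR_ge0.
- by rewrite lef_pV2 ?posrE // ler_nat ltnS leq_addl.
- by rewrite ler_pdivrMr // mul1r (ler_weXn2l powpM_ge1) ?leq_addr.
Qed.

Lemma mul_div_succ_le (S c : R) : 0 <= S -> 0 <= c -> S * (c / (S + 1)) <= c.
Proof.
move=> S0 c0; rewrite mulrCA ler_piMr // ler_pdivrMr ?mul1r ?lerDl //.
by rewrite ltr_wpDl.
Qed.

(* The bounds are divided by [block_mass k + 1] because the blocks multiply
   [x] and [T_i^n x - ind L] on the window. *)
Lemma stage_exists k t : exists n, [/\ (t < n)%N,
  forall b, mass x n b <= half k / penalty t / (block_mass k + 1) &
  forall i b, mass (fun m => iter n (T i) x m - ind (len k) m) 0 b <=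
    (len k).+1%:R^-1 / (block_mass k + 1)].
Proof.
have S1 : 0 < block_mass k + 1 by rewrite ltr_wpDl ?block_mass_ge0.
have tail0 : 0 < half k / penalty t / (block_mass k + 1).
  by rewrite !divr_gt0 ?half_gt0 ?penalty_gt0.
have [a a_tail] := in_lp_tail x_lp tail0.
have head0 : 0 < (len k).+1%:R^-1 / (block_mass k + 1) by rewrite divr_gt0 ?invr_gt0.
have [n n_ge n_ok] := diag_approx_late i0 (maxn t.+1 a) (in_lp_ind (len k)) head0.
exists n; split=> // [|b]; first exact: leq_trans (leq_maxl _ _) n_ge.
exact: le_trans (mass_narrowl _ b (leq_trans (leq_maxr _ _) n_ge)) (a_tail b).
Qed.

Definition stage_time k t : nat := proj1_sig (cid (stage_exists k t)).

Lemma stage_timeP k t : [/\ (t < stage_time k t)%N,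
  forall b, mass x (stage_time k t) b <= half k / penalty t / (block_mass k + 1) &
  forall i b, mass (fun m => iter (stage_time k t) (T i) x m - ind (len k) m) 0 b <=
    (len k).+1%:R^-1 / (block_mass k + 1)].
Proof. exact: proj2_sig (cid (stage_exists k t)). Qed.

Fixpoint start k : nat := if k is k'.+1 then (stage_time k' (start k') + len k')%N else 0%N.
Definition time k := stage_time k (start k).

Lemma startS k : start k.+1 = (time k + len k)%N.
Proof. by []. Qed.

Lemma start_lt_time k : (start k < time k)%N.
Proof. by case: (stage_timeP k (start k)). Qed.

Lemma start_mono : {homo start : k k' / (k <= k')%N}.
Proof.
apply: (homo_leq leqnn leq_trans) => k.
by rewrite startS (leq_trans (ltnW (start_lt_time k))) ?leq_addr.
Qed.

Lemma start_ge k : (k <= start k)%N.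
Proof.
elim: k => // k IH; rewrite startS.
by have := start_lt_time k; lia.
Qed.

Lemma window_before k k' : (k < k')%N -> (time k + len k <= start k')%N.
Proof. by rewrite -startS; exact: start_mono. Qed.

Lemma time_lt k k' : (k < k')%N -> (time k < time k')%N.
Proof. by move=> /window_before; have := start_lt_time k'; lia. Qed.

Definition in_window k m := (time k <= m < time k + len k)%N.

Lemma in_window_uniq k k' m : in_window k m -> in_window k' m -> k = k'.
Proof.
rewrite /in_window => km k'm; case: (ltngtP k k') => [kk'|k'k|//].
- by move: km k'm (window_before kk') (start_lt_time k'); lia.
- by move: km k'm (window_before k'k) (start_lt_time k); lia.
Qed.

(* The windows are disjoint, so at most one summand is present. *)
Definition mult i m : K := \sum_(k < m.+1 | in_window k m) block k i (m - time k).

Lemma mult_in k i m : in_window k m -> mult i m = block k i (m - time k).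
Proof.
move=> km; have k_lt : (k < m.+1)%N.
  by move: km (start_ge k) (start_lt_time k); rewrite /in_window; lia.
rewrite /mult (bigD1 (Ordinal k_lt)) //= big1 ?addr0 // => k' /andP[k'm k'_neq].
by case/eqP: k'_neq; apply: val_inj; exact: in_window_uniq k'm km.
Qed.

Lemma mult_gap k i m : (start k <= m < time k)%N -> mult i m = 0.
Proof.
move=> km; rewrite /mult big1 // => k'; rewrite /in_window.
case: (ltngtP k' k) => [/window_before|/time_lt|->]; move: km; lia.
Qed.

Definition xs i m := mult i m * x m.

Lemma mass_xs_window k i :
  mass (xs i) (time k) (time k + len k) <= half k / penalty (start k).
Proof.
have [_ x_tail _] := stage_timeP k (start k).
apply: le_trans (@mass_mul_le (mult i) x _ _ (block_mass k) _) _.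
  move=> m km; rewrite (mult_in i km); apply: block_term_le.
  by move: km => /andP[]; lia.
apply: le_trans (ler_wpM2l (block_mass_ge0 k) (x_tail _)) _.
by rewrite mul_div_succ_le ?block_mass_ge0 ?divr_ge0 ?ltW ?half_gt0 ?penalty_gt0.
Qed.

Lemma mass_xs_gap k i : mass (xs i) (start k) (time k) = 0.
Proof. by apply: mass0 => m km; rewrite /xs (mult_gap i km) mul0r. Qed.

Lemma mass_xs_stage k i : mass (xs i) (start k) (start k.+1) <= half k / penalty (start k).
Proof.
rewrite startS (mass_cat _ (ltnW (start_lt_time k)) (leq_addr _ _)).
by rewrite mass_xs_gap add0r mass_xs_window.
Qed.

Lemma mass_xs_later k i q : mass (xs i) (start k.+1) (start (k.+1 + q)) <=
  (half k - half (k + q)) / penalty (start k.+1).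
Proof.
elim: q => [|q IH]; first by rewrite !addn0 /mass big_geq // subrr mul0r.
rewrite addnS (mass_cat _ (start_mono (leq_addr q _)) (start_mono (leqnSn _))).
have stage_le : mass (xs i) (start (k.+1 + q)) (start (k.+1 + q).+1) <=
    half (k + q).+1 / penalty (start k.+1).
  apply: le_trans (mass_xs_stage _ _) _; rewrite addSn ler_pM2l ?half_gt0 //.
  by rewrite lef_pV2 ?posrE ?penalty_gt0 // penalty_mono // start_mono // ltnS leq_addr.
apply: le_trans (lerD IH stage_le) _.
rewrite -mulrDl ler_pM2r ?invr_gt0 ?penalty_gt0 // addnS.
have -> : half (k + q).+1 = 2^-1 * half (k + q) by rewrite /half exprS.
by have := half_gt0 (k + q); lra.
Qed.

Lemma mass_xs_tail k i b : mass (xs i) (start k.+1) b <= half k / penalty (start k.+1).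
Proof.
have b_le : (b <= start (k.+1 + b))%N := leq_trans (leq_addl _ _) (start_ge _).
apply: le_trans (mass_widenr _ _ b_le) (le_trans (mass_xs_later k i b) _).
by rewrite ler_pM2r ?invr_gt0 ?penalty_gt0 // gerBl ltW ?half_gt0.
Qed.

Lemma in_lp_xs i : in_lp nrm p (xs i).
Proof.
apply/in_lpP; exists (mass (xs i) 0 (start 1) + half 0 / penalty (start 1)) => b.
by apply: le_trans (mass_split_le _ 0 b (start 1)) _; rewrite lerD2l mass_xs_tail.
Qed.

Lemma iter_xs_window k i j : (j < len k)%N ->
  iter (time k) (T i) (xs i) j = block k i j * iter (time k) (T i) x j.
Proof.
move=> jL; have jk : in_window k (j + time k) by rewrite /in_window; lia.
by rewrite iter_wshiftM (mult_in i jk) addnK.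
Qed.

Lemma head_close k i :
  mass (fun j => iter (time k) (T i) (xs i) j - block k i j) 0 (len k) <= (len k).+1%:R^-1.
Proof.
have [_ _ ind_close] := stage_timeP k (start k).
rewrite (@eq_mass _ (fun j => block k i j * (iter (time k) (T i) x j - ind (len k) j))).
  apply: le_trans (@mass_mul_le (block k i) _ _ _ (block_mass k) _) _.
    by move=> j /andP[_ jL]; exact: block_term_le.
  apply: le_trans (ler_wpM2l (block_mass_ge0 k) (ind_close i (len k))) _.
  by rewrite mul_div_succ_le ?block_mass_ge0 ?invr_ge0.
by move=> j /andP[_ jL]; rewrite iter_xs_window // /ind jL mulrBr mulr1.
Qed.

Lemma tail_small k i b :
  mass (iter (time k) (T i) (xs i)) (len k) b <= (len k).+1%:R^-1.
Proof.
apply: le_trans (mass_iter_wshift_le (w_le i) _ _ _ _) _.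
rewrite [(len k + _)%N]addnC -startS.
apply: le_trans (ler_wpM2l _ (mass_xs_tail k i _)) _; first exact/exprn_ge0/powR_ge0.
rewrite startS mulrCA; apply: le_trans (penalty_absorb (time k) (len k)).
by apply: ler_piMl; rewrite ?half_le1 // divr_ge0 ?exprn_ge0 ?powR_ge0 // ltW ?penalty_gt0.
Qed.

Lemma xs_dense y th : (forall i, in_lp nrm p (y i)) -> 0 < th ->
  exists n, forall i b, mass (fun m => iter n (T i) (xs i) m - y i m) 0 b <= th.
Proof.
move=> y_lp th0; set C := 2 `^ p; have C1 : 1 <= C := two_powp_ge1.
have C0 : 0 < C := lt_le_trans ltr01 C1.
set eta := th / (4 * (C * C)); have eta0 : 0 < eta by rewrite divr_gt0 ?mulr_gt0.
have a_ex i : exists n, forall b, mass (fun m => iter n (T i) x m - y i m) 0 b <= eta.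
  by have [n n_ok] := diag_approx (y_lp i) eta0; exists n; exact: n_ok i.
have [a a_ok] := choice a_ex.
have Lt_ex i : exists L, forall b, mass (iter (a i) (T i) x) L b <= eta.
  exact: in_lp_tail (in_lp_iter_wshift (w_le i) _ x_lp) eta0.
have [Lt Lt_ok] := choice Lt_ex.
have [r r_le] := small_inv_nat eta0.
have [k [k_exps k_len]] := code_onto a (\max_i Lt i + r)%N.
have L_le : (len k).+1%:R^-1 <= eta.
  by apply: le_trans r_le; rewrite lef_pV2 ?posrE // ler_nat ltnS k_len leq_addl.
exists (time k) => i b.
have block_y b' : mass (fun m => block k i m - y i m) 0 b' <= eta.
  by rewrite /block k_exps.
have block_tail : mass (block k i) (len k) b <= eta.
  rewrite /block k_exps; apply: le_trans (mass_narrowl _ _ _) (Lt_ok i b).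
  by rewrite k_len (leq_trans (leq_bigmax i)) ?leq_addr.
have orbit_tail : mass (fun m => iter (time k) (T i) (xs i) m - block k i m) (len k) b <=
    C * (eta + eta).
  apply: le_trans (massB_le _ _ _ _) _.
  by rewrite ler_wpM2l ?(ltW C0) ?lerD ?(le_trans (tail_small k i b)).
apply: le_trans (massB_trans_le _ _ (block k i) _ _) _.
apply: le_trans (ler_wpM2l (ltW C0) (lerD (mass_split_le _ 0 b (len k)) (block_y b))) _.
have head := le_trans (head_close k i) L_le.
apply: le_trans (ler_wpM2l (ltW C0) (lerD (lerD head orbit_tail) (lexx _))) _.
have -> : th = 4 * (C * C) * eta.
  by rewrite /eta mulrC -mulrA mulVf ?mulr1 // gt_eqF ?mulr_gt0.
have CC : C * eta <= C * C * eta by rewrite -mulrA ler_pMl // mulr_gt0.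
lra.
Qed.

Lemma diag_dsum_hypercyclic : dsum_hypercyclic nrm p (fun i => T i).
Proof.
exists xs; split=> [i|y y_lp eps eps0]; first exact: in_lp_xs.
have [n n_ok] := xs_dense y_lp (divr_gt0 (powR_gt0 p eps0) (ltr0Sn _ 1)).
exists n => i; apply: (lp_norm_lt_mass eps0 (n_ok i)).
by have := powR_gt0 p eps0; lra.
Qed.

End Construction.
End DiagonalOrbit.

Lemma uniform_weight_bound N (w : 'I_N -> nat -> K) :
  (forall i, bounded_weights nrm (w i)) ->
  exists2 M, 1 <= M & forall i m, nrm (w i m) <= M.
Proof.
move=> /choice[Mw Mw_ok]; exists (\big[Num.max/1]_i Mw i); first exact: bigmax_ge_id.
by move=> i m; apply: le_trans (Mw_ok i m) (le_bigmax _ _ i).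
Qed.

Theorem cor3p8_statement_holds : cor3p8_statement nrm p.
Proof.
move=> N N_ge2 w /uniform_weight_bound[M M_ge1 w_le] [x [x_lp x_diag]].
have N_gt0 : (0 < N)%N by apply: leq_trans N_ge2.
exact: (diag_dsum_hypercyclic M_ge1 w_le x_lp x_diag (Ordinal N_gt0)).
Qed.

End LpShifts.

Theorem corollary3p8 (R : realType) (p : R) :
  1 <= p ->
  cor3p8_statement (@absRR R) p /\ cor3p8_statement (@absRC R) p.
Proof.
move=> p_ge1; split; apply: cor3p8_statement_holds => //.
- exact: normr_ge0.
- exact: ler_normD.
- exact: normrM.
- exact: normrN.
- by move=> n; rewrite /absRR normr_nat.
- by case=> a b; rewrite /absRC /=; exact: sqrtr_ge0.
- exact: le_normcD.
- exact: ComplexField.Normc.normcM.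
- exact: normcN.
- move=> n; rewrite /absRC -[n%:R]/(1 *+ n) normcMn.
  by rewrite -[1]/(1%:R) ComplexField.Normc.normc1.
Qed.
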